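(* Let $\theta:H\to H$ be an endomorphism and $E_1,\dots,E_t$ $n$-ary Endo-primary hyperideals of $H$ associated with $\theta$ such that $rad(E_j)=rad(E_l)$ for all $j,l\in\{1,\dots,t\}$. Then $\bigcap_{j=1}^tE_j$ is an $n$-ary Endo-primary hyperideal of $H$ associated with $\theta$.
   Context: Throughout, $(H,h,k)$ is a commutative Krasner $(m,n)$-hyperring with scalar identity $1_H$: $(H,h)$ is a canonical $m$-ary hypergroup (a commutative associative $m$-ary hyperoperation $h:H^m\to\mathcal P^*(H)$ with a unique zero $0$ such that $h(u,0^{(m-1)})=\{u\}$, unique inverses, reversibility), $k:H^n\to H$ is a commutative associative $n$-ary operation distributing over $h$ in each argument, $k(0,u_2^n)=0$, and $k(u,1_H^{(n-1)})=u$ for all $u$. Notation: $u_i^j$ denotes $u_i,\dots,u_j$ (empty if $j<i$); $u^{(t)}$ denotes $u$ repeated $t$ times; for $r=l(n-1)+1$, $k_{(l)}(u_1^r)=k(k(\cdots k(k(u_1^n),u_{n+1}^{2n-1})\cdots),u_{r-n+1}^{r})$. A hyperideal is a nonempty $I\subseteq H$ such that $(I,h)$ is an $m$-ary subhypergroup and $k(u_1^{i-1},I,u_{i+1}^n)\subseteq I$ for all $u_j\in H$. An endomorphism is a map $\theta$ with $\theta(h(u_1^m))=h(\theta(u_1),\dots,\theta(u_m))$, $\theta(k(u_1^n))=k(\theta(u_1),\dots,\theta(u_n))$, $\theta(1_H)=1_H$. $rad(E)$ is the set of $u$ with $k(u^{(r)},1_H^{(n-r)})\in E$ for some $r\le n$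 or $k_{(l)}(u^{(r)})\in E$ for some $r=l(n-1)+1>n$ (equivalently the intersection of all $n$-ary prime hyperideals containing $E$). A proper hyperideal $E$ is an $n$-ary Endo-primary hyperideal associated with $\theta$ if for all $u_1,\dots,u_n\in H$, $k(u_1^n)\in E$ implies that for some $i$, $u_i\in E$ or $\theta\big(k(u_1^{i-1},1_H,u_{i+1}^n)\big)\in rad(E)$. *)

(* lists encode argument tuples of the m-ary / n-ary operations. *)
From Stdlib Require Import List Permutation Arith.
Import ListNotations.

Definition sing {H : Type} (x : H) : H -> Prop := fun y => y = x.
Definition seteq {H : Type} (A B : H -> Prop) : Prop := forall z, A z <-> B z.

(* replace the i-th (0-based) entry of xs by y *)
Definition repl {H : Type} (i : nat) (y : H) (xs : list H) : list H :=
  firstn i xs ++ y :: skipn (S i) xs.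

Definition hS {H : Type} (h : list H -> H -> Prop) (As : list (H -> Prop)) : H -> Prop :=
  fun z => exists xs, Forall2 (fun x A => A x) xs As /\ h xs z.

Record KrasnerHyperring := {
  car : Type;
  ar_m : nat;
  ar_n : nat;
  hop : list car -> car -> Prop;   (* m-ary hyperoperation h, meaningful on lists of length m *)
  kop : list car -> car;           (* n-ary operation k, meaningful on lists of length n *)
  zero : car;
  one : car;
  inv : car -> car;
  m_ge2 : 2 <= ar_m;
  n_ge2 : 2 <= ar_n;
  (* (H,h) canonical m-ary hypergroup *)
  hop_nonempty : forall xs, length xs = ar_m -> exists z, hop xs z;
  hop_assoc : forall xs i, length xs = 2 * ar_m - 1 -> i <= ar_m - 1 ->
    seteq (hS hop (map sing (firstn i xs) ++ hop (firstn ar_m (skipn i xs))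
                     :: map sing (skipn (i + ar_m) xs)))
          (hS hop (hop (firstn ar_m xs) :: map sing (skipn ar_m xs)));
  hop_comm : forall xs ys, length xs = ar_m -> Permutation xs ys -> seteq (hop xs) (hop ys);
  hop_zero : forall x, seteq (hop (x :: repeat zero (ar_m - 1))) (sing x);
  hop_zero_unique : forall e, (forall x, seteq (hop (x :: repeat e (ar_m - 1))) (sing x)) -> e = zero;
  hop_inv : forall x, hop (x :: inv x :: repeat zero (ar_m - 2)) zero;
  hop_inv_unique : forall x y, hop (x :: y :: repeat zero (ar_m - 2)) zero -> y = inv x;
  hop_rev : forall xs x i, length xs = ar_m -> i < ar_m -> hop xs x ->
    hop (x :: map inv (firstn i xs ++ skipn (S i) xs)) (nth i xs zero);
  kop_assoc : forall xs i, length xs = 2 * ar_n - 1 -> i <= ar_n - 1 ->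
    kop (firstn i xs ++ kop (firstn ar_n (skipn i xs)) :: skipn (i + ar_n) xs)
    = kop (kop (firstn ar_n xs) :: skipn ar_n xs);
  kop_comm : forall xs ys, length xs = ar_n -> Permutation xs ys -> kop xs = kop ys;
  kop_distr : forall xs i ys, length xs = ar_n -> i < ar_n -> length ys = ar_m ->
    seteq (fun z => exists y, hop ys y /\ z = kop (repl i y xs))
          (hop (map (fun a => kop (repl i a xs)) ys));
  kop_zero : forall us, length us = ar_n - 1 -> kop (zero :: us) = zero;
  kop_one : forall x, kop (x :: repeat one (ar_n - 1)) = x
}.

Section Defs.
Variable R : KrasnerHyperring.
Local Notation H := (car R).
Local Notation m := (ar_m R).
Local Notation n := (ar_n R).
Local Notation h := (hop R).
Local Notation k := (kop R).

Definition hyperideal (I : H -> Prop) : Prop :=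
  (exists x, I x) /\
  I (zero R) /\
  (forall xs, length xs = m -> Forall I xs -> forall z, h xs z -> I z) /\
  (forall x, I x -> I (inv R x)) /\
  (forall xs i a, length xs = n -> i < n -> I a -> I (k (repl i a xs))).

Definition proper (I : H -> Prop) : Prop := exists x, ~ I x.

Definition endomorphism (th : H -> H) : Prop :=
  (forall xs, length xs = m -> seteq (fun z => exists y, h xs y /\ z = th y) (h (map th xs))) /\
  (forall xs, length xs = n -> th (k xs) = k (map th xs)) /\
  th (one R) = one R.

Fixpoint kl (l : nat) (xs : list H) : H :=
  match l with
  | O => hd (zero R) xs
  | S l' => k (kl l' (firstn (l' * (n - 1) + 1) xs)
               :: firstn (n - 1) (skipn (l' * (n - 1) + 1) xs))
  end.

Definition rad (E : H -> Prop) : H -> Prop := fun u =>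
  (exists r, 1 <= r <= n /\ E (k (repeat u r ++ repeat (one R) (n - r)))) \/
  (exists l, l * (n - 1) + 1 > n /\ E (kl l (repeat u (l * (n - 1) + 1)))).

Definition endo_primary (th : H -> H) (E : H -> Prop) : Prop :=
  hyperideal E /\ proper E /\
  forall us, length us = n -> E (k us) ->
    exists i, i < n /\ (E (nth i us (zero R)) \/ rad E (th (k (repl i (one R) us)))).

End Defs.

(* Write [x y] for the binary product [k(x, y, 1, ..., 1)]; it is commutative and
   associative, every [k(u_1^n)] is the product of its arguments, and the radical
   consists of the elements some positive power of which lies in the hyperideal,
   so the radical of a finite intersection is the intersection of the radicals.

   The key observation is that an Endo-primary [E] contains every [a] in [rad E]
   with [θ a] outside [rad E]: otherwise pick [s] with [a^s] outside [E] and
   [a^(s+1)] inside it, and apply Endo-primarity to [k(a, a^s, 1, ..., 1)].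
   Now let [k(u_1^n)] lie in every [E_j] while no [θ(k(u_1^(i-1), 1, u_(i+1)^n))]
   lies in the common radical [P]. Endo-primarity of [E_1] gives [u_i] in [E_1],
   hence in [P]; and [θ u_i] is not in [P], since it divides
   [θ(k(u_1^(l-1), 1, u_(l+1)^n))] for any [l <> i]. So [u_i] lies in every [E_j]. *)
From Stdlib Require Import List Arith Lia Permutation Classical.
Import ListNotations.

Lemma firstn_repeat {A} (x : A) a b : firstn a (repeat x b) = repeat x (Nat.min a b).
Proof. revert b; induction a; intros [|b]; simpl; auto. now rewrite IHa. Qed.

Lemma skipn_repeat {A} (x : A) a b : skipn a (repeat x b) = repeat x (b - a).
Proof. revert b; induction a; intros [|b]; simpl; auto. Qed.

Lemma repl_S {A} i (y a : A) xs : repl (S i) y (a :: xs) = a :: repl i y xs.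
Proof. reflexivity. Qed.

Lemma repl_length {A} i (y : A) xs : i < length xs -> length (repl i y xs) = length xs.
Proof.
  revert i; induction xs; intros [|i] Hi; cbn [length] in Hi; try lia; try reflexivity.
  rewrite repl_S; cbn; rewrite IHxs; lia.
Qed.

Lemma repl_nth {A} i xs (d : A) : i < length xs -> repl i (nth i xs d) xs = xs.
Proof.
  revert i; induction xs; intros [|i] Hi; cbn [length] in Hi; try lia; try reflexivity.
  rewrite repl_S; cbn; rewrite IHxs by lia; reflexivity.
Qed.

Lemma nth_repl_neq {A} i j (y : A) xs d : i <> j -> j < length xs ->
  nth j (repl i y xs) d = nth j xs d.
Proof.
  revert i j; induction xs; intros [|i] [|j] Hij Hj; cbn [length] in Hj; try lia; auto.
  rewrite repl_S; apply IHxs; lia.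
Qed.

Section Products.

Variable R : KrasnerHyperring.
Local Notation H := (car R).
Local Notation n := (ar_n R).
Local Notation k := (kop R).

Definition kmul (x y : H) : H := k (x :: y :: repeat (one R) (n - 2)).

Definition kprod (xs : list H) : H := fold_right kmul (one R) xs.

Fixpoint kpow (x : H) (r : nat) : H :=
  match r with O => one R | S r' => kmul x (kpow x r') end.

Let n_ge2 : 2 <= n := n_ge2 R.

Lemma kop_assoc1 x ys zs : length ys = n -> length zs = n - 2 ->
  k (x :: k ys :: zs) = k (k (x :: firstn (n - 1) ys) :: skipn (n - 1) ys ++ zs).
Proof.
  intros Hys Hzs.
  pose proof (kop_assoc R (x :: ys ++ zs) 1) as A.
  rewrite length_cons, length_app in A; specialize (A ltac:(lia) ltac:(lia)).
  assert (Fys : firstn n (ys ++ zs) = ys).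
  { rewrite firstn_app, Hys, Nat.sub_diag, firstn_all2, app_nil_r by lia. reflexivity. }
  assert (Szs : skipn n (ys ++ zs) = zs).
  { rewrite skipn_app, Hys, Nat.sub_diag, skipn_all2 by lia. reflexivity. }
  replace n with (S (n - 1)) in A at 3 4 by lia.
  cbn [firstn skipn app Nat.add] in A.
  replace (S (n - 1)) with n in A by lia.
  rewrite Fys, Szs, firstn_app, skipn_app in A.
  replace (n - 1 - length ys) with 0 in A by lia.
  rewrite firstn_O, skipn_O, app_nil_r in A.
  exact A.
Qed.

Lemma kop_ones : k (repeat (one R) n) = one R.
Proof.
  replace n with (S (n - 1)) by lia. apply kop_one.
Qed.

Lemma kmul_1r x : kmul x (one R) = x.
Proof.
  unfold kmul. replace (one R :: repeat (one R) (n - 2)) with (repeat (one R) (n - 1)).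
  - apply kop_one.
  - replace (n - 1) with (S (n - 2)) by lia. reflexivity.
Qed.

Lemma kmulC x y : kmul x y = kmul y x.
Proof.
  apply kop_comm; [cbn; rewrite repeat_length; lia | constructor].
Qed.

Lemma kmul_1l x : kmul (one R) x = x.
Proof. rewrite kmulC; apply kmul_1r. Qed.

Lemma kmulA x y z : kmul x (kmul y z) = kmul (kmul x y) z.
Proof.
  assert (Hyz : kmul y z = k (y :: repeat (one R) (n - 2) ++ [z])).
  { apply kop_comm; [cbn; rewrite repeat_length; lia|].
    constructor. apply Permutation_cons_app. rewrite app_nil_r. reflexivity. }
  unfold kmul at 1; rewrite Hyz, kop_assoc1 by (cbn; rewrite ?length_app, ?repeat_length; cbn; lia).
  change (y :: repeat (one R) (n - 2) ++ [z]) with ((y :: repeat (one R) (n - 2)) ++ [z]).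
  replace (n - 1) with (length (y :: repeat (one R) (n - 2))) by (cbn; rewrite repeat_length; lia).
  rewrite firstn_app, skipn_app, firstn_all, skipn_all, Nat.sub_diag, firstn_O, skipn_O, app_nil_r.
  reflexivity.
Qed.

Lemma kmulCA x y z : kmul x (kmul y z) = kmul y (kmul x z).
Proof. rewrite !kmulA, (kmulC x y). reflexivity. Qed.

Lemma kop_cons x ys : length ys = n - 1 -> k (x :: ys) = kmul x (k (ys ++ [one R])).
Proof.
  intros Hys. unfold kmul.
  rewrite kop_assoc1 by (rewrite ?length_app, ?repeat_length; cbn; lia).
  rewrite firstn_app, skipn_app, firstn_all2, skipn_all2, Hys, Nat.sub_diag by lia.
  cbn; rewrite app_nil_r.
  replace (one R :: repeat (one R) (n - 2)) with (repeat (one R) (n - 1)).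
  - symmetry; apply kop_one.
  - replace (n - 1) with (S (n - 2)) by lia. reflexivity.
Qed.

Lemma kop_pad zs : length zs <= n -> k (zs ++ repeat (one R) (n - length zs)) = kprod zs.
Proof.
  induction zs as [|x zs IH]; intros Hl; cbn [app length kprod fold_right].
  - rewrite Nat.sub_0_r. apply kop_ones.
  - cbn in Hl. rewrite kop_cons by (rewrite length_app, repeat_length; lia).
    rewrite <- app_assoc, <- repeat_cons.
    change (one R :: repeat (one R) (n - S (length zs))) with (repeat (one R) (S (n - S (length zs)))).
    replace (S (n - S (length zs))) with (n - length zs) by lia.
    rewrite IH by lia. reflexivity.
Qed.

Lemma kop_kprod xs : length xs = n -> k xs = kprod xs.
Proof.
  intros Hl. rewrite <- kop_pad by lia. rewrite Hl, Nat.sub_diag, app_nil_r. reflexivity.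
Qed.

Lemma kprod_repl i xs : i < length xs ->
  kprod xs = kmul (nth i xs (zero R)) (kprod (repl i (one R) xs)).
Proof.
  revert i; induction xs; intros [|i] Hi; cbn [length] in Hi; try lia.
  - cbn [nth]. unfold repl, kprod; cbn. rewrite kmul_1l. reflexivity.
  - rewrite repl_S. cbn [kprod fold_right nth]. fold (kprod xs) (kprod (repl i (one R) xs)).
    rewrite (IHxs i) by lia. apply kmulCA.
Qed.

Lemma kop_repl_factor i j xs : length xs = n -> i < n -> j < n -> i <> j ->
  exists y, k (repl j (one R) xs) = kmul (nth i xs (zero R)) y.
Proof.
  intros Hl Hi Hj Hij.
  rewrite kop_kprod, (kprod_repl i) by (rewrite ?repl_length; lia).
  rewrite nth_repl_neq by lia. eauto.
Qed.

Lemma kpowD x a b : kpow x (a + b) = kmul (kpow x a) (kpow x b).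
Proof. induction a; cbn. - now rewrite kmul_1l. - now rewrite IHa, kmulA. Qed.

Lemma kpowMl x y r : kpow (kmul x y) r = kmul (kpow x r) (kpow y r).
Proof.
  induction r; cbn. - now rewrite kmul_1r.
  - rewrite IHr, !kmulA. f_equal. rewrite <- !kmulA. f_equal. apply kmulC.
Qed.

Lemma kpowM x a b : kpow (kpow x a) b = kpow x (a * b).
Proof.
  induction b; cbn. - now rewrite Nat.mul_0_r.
  - rewrite IHb, <- kpowD. f_equal. lia.
Qed.

Lemma kpow1 x : kpow x 1 = x.
Proof. apply kmul_1r. Qed.

Lemma kprod_repeat x r : kprod (repeat x r) = kpow x r.
Proof. induction r; cbn; auto. now rewrite <- IHr. Qed.

Lemma kl_repeat u l : kl R l (repeat u (l * (n - 1) + 1)) = kpow u (l * (n - 1) + 1).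
Proof.
  induction l.
  - cbn. symmetry; apply kmul_1r.
  - cbn [kl]. rewrite firstn_repeat, skipn_repeat, firstn_repeat, !Nat.min_l, IHl by lia.
    rewrite kop_kprod by (cbn; rewrite repeat_length; lia).
    cbn [kprod fold_right]; fold (kprod (repeat u (n - 1))).
    rewrite kprod_repeat, <- kpowD. f_equal. lia.
Qed.

Lemma th_kmul th : endomorphism R th -> forall x y, th (kmul x y) = kmul (th x) (th y).
Proof.
  intros [_ [Hk H1]] x y. unfold kmul.
  rewrite Hk by (cbn; rewrite repeat_length; lia).
  cbn. rewrite map_repeat, H1. reflexivity.
Qed.

Lemma th_kpow th : endomorphism R th -> forall x r, th (kpow x r) = kpow (th x) r.
Proof.
  intros Hth x r. induction r; cbn.
  - apply Hth.
  - rewrite th_kmul, IHr by auto. reflexivity.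
Qed.

End Products.

Section Radical.

Variable R : KrasnerHyperring.
Local Notation H := (car R).
Local Notation n := (ar_n R).
Local Notation kmul := (kmul R).
Local Notation kpow := (kpow R).

Let n_ge2 : 2 <= n := n_ge2 R.

Definition absorbing (E : H -> Prop) : Prop := forall a y, E a -> E (kmul a y).

Lemma hyperideal_absorbing E : hyperideal R E -> absorbing E.
Proof.
  intros (_ & _ & _ & _ & Habs) a y Ha.
  apply (Habs (one R :: y :: repeat (one R) (n - 2)) 0 a); auto; cbn; rewrite ?repeat_length; lia.
Qed.

Lemma hyperideal_not_one E : hyperideal R E -> proper R E -> ~ E (one R).
Proof.
  intros HE [x Hx] H1. apply Hx. rewrite <- (kmul_1l R x).
  apply hyperideal_absorbing; auto.
Qed.

Lemma hyperideal_bigcap t (E : nat -> H -> Prop) : 0 < t ->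
  (forall j, j < t -> hyperideal R (E j)) ->
  hyperideal R (fun x => forall j, j < t -> E j x).
Proof.
  intros Ht HE.
  split; [exists (zero R); intros j Hj; apply HE; auto|].
  split; [intros j Hj; apply HE; auto|].
  split; [|split].
  - intros xs Hl Hxs z Hz j Hj. apply (proj1 (proj2 (proj2 (HE j Hj))) xs); auto.
    eapply Forall_impl; [|exact Hxs]. auto.
  - intros x Hx j Hj. apply (HE j Hj). auto.
  - intros xs i a Hl Hi Ha j Hj. apply (HE j Hj); auto.
Qed.

Lemma kpow_absorbing E u r s : absorbing E -> r <= s -> E (kpow u r) -> E (kpow u s).
Proof.
  intros HE Hrs Hr. replace s with (r + (s - r)) by lia. rewrite kpowD. auto.
Qed.

Lemma rad_iff_kpow E u : absorbing E -> rad R E u <-> exists r, 1 <= r /\ E (kpow u r).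
Proof.
  intros HE; split.
  - intros [[r [Hr Er]] | [l [Hl El]]].
    + exists r. split; [lia|]. rewrite <- kprod_repeat, <- kop_pad; rewrite repeat_length; auto; lia.
    + exists (l * (n - 1) + 1). split; [lia|]. rewrite <- kl_repeat. exact El.
  - intros [r [Hr Er]]. destruct (le_lt_dec r n).
    + left. exists r. split; [lia|].
      rewrite <- (repeat_length u r) at 2. rewrite kop_pad, kprod_repeat; auto.
      rewrite repeat_length; lia.
    + right. exists r. split; [nia|]. rewrite kl_repeat.
      apply (kpow_absorbing _ _ r); auto. nia.
Qed.

Lemma rad_mem E u : absorbing E -> E u -> rad R E u.
Proof. intros HE Hu. apply rad_iff_kpow; auto. exists 1. rewrite kpow1. auto. Qed.

Lemma rad_absorbing E : absorbing E -> absorbing (rad R E).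
Proof.
  intros HE a y Ha. apply rad_iff_kpow in Ha as [r [Hr Er]]; auto.
  apply rad_iff_kpow; auto. exists r. rewrite kpowMl. auto.
Qed.

Lemma rad_kpow E u s : absorbing E -> 1 <= s -> rad R E (kpow u s) -> rad R E u.
Proof.
  intros HE Hs Hu. apply rad_iff_kpow in Hu as [r [Hr Er]]; auto.
  apply rad_iff_kpow; auto. exists (s * r). rewrite <- kpowM. split; [nia | auto].
Qed.

Lemma rad_bigcap t (E : nat -> H -> Prop) u :
  (forall j, j < t -> absorbing (E j)) ->
  rad R (fun x => forall j, j < t -> E j x) u <-> (forall j, j < t -> rad R (E j) u).
Proof.
  intros HE.
  assert (HI : absorbing (fun x => forall j, j < t -> E j x)) by (intros a y Ha j Hj; apply HE; auto).
  rewrite rad_iff_kpow by exact HI. split.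
  - intros [r [Hr Er]] j Hj. apply rad_iff_kpow; eauto.
  - intros Hu.
    assert (Hcommon : forall t', t' <= t ->
              exists N, 1 <= N /\ forall j, j < t' -> E j (kpow u N)).
    { induction t' as [|t' IH]; intros Ht'.
      - exists 1. split; [lia | intros; lia].
      - destruct IH as [N [HN EN]]; [lia|].
        destruct (proj1 (rad_iff_kpow _ _ (HE t' ltac:(lia))) (Hu t' ltac:(lia))) as [r [Hr Er]].
        exists (N + r). split; [lia|]. intros j Hj.
        destruct (Nat.eq_dec j t') as [->|Hjt].
        + apply (kpow_absorbing _ _ r); [apply HE; lia | lia | exact Er].
        + apply (kpow_absorbing _ _ N); [apply HE; lia | lia | apply EN; lia]. }
    destruct (Hcommon t (le_n t)) as [N [HN EN]]. eauto.
Qed.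

Lemma kpow_threshold (E : H -> Prop) a r : ~ E a -> E (kpow a (S r)) ->
  exists s, 1 <= s /\ ~ E (kpow a s) /\ E (kpow a (S s)).
Proof.
  intros Ha. induction r as [|r IH]; intros Er.
  - rewrite kpow1 in Er. contradiction.
  - destruct (classic (E (kpow a (S r)))) as [Er'|Nr]; auto.
    exists (S r). auto with arith.
Qed.

End Radical.

Lemma rad_th_kop_repl_of_rad_th_nth R th E us i :
  endomorphism R th -> absorbing R E -> length us = ar_n R -> i < ar_n R ->
  rad R E (th (nth i us (zero R))) ->
  exists l, l < ar_n R /\ rad R E (th (kop R (repl l (one R) us))).
Proof.
  intros Hth HE Hl Hi Hu. pose proof (n_ge2 R).
  set (l := if Nat.eq_dec i 0 then 1 else 0).
  assert (Hli : l <> i) by (unfold l; destruct Nat.eq_dec; lia).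
  exists l. split; [unfold l; destruct Nat.eq_dec; lia|].
  destruct (kop_repl_factor R i l us) as [y ->]; auto; [unfold l; destruct Nat.eq_dec; lia|].
  rewrite th_kmul by exact Hth. apply rad_absorbing; auto.
Qed.

Lemma endo_primary_mem_of_rad R th E a :
  endomorphism R th -> endo_primary R th E -> rad R E a -> ~ rad R E (th a) -> E a.
Proof.
  intros Hth (HE & Hp & Hprim) Ra Nta. pose proof (n_ge2 R).
  pose proof (hyperideal_absorbing R E HE) as Habs.
  apply NNPP; intros Na.
  apply rad_iff_kpow in Ra as [[|r] [Hr Er]]; auto; [lia|].
  destruct (kpow_threshold R E a r Na Er) as [s [Hs [Ns Es]]].
  set (L := a :: kpow R a s :: repeat (one R) (ar_n R - 2)).
  assert (HL : length L = ar_n R) by (cbn; rewrite repeat_length; lia).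
  assert (Hrad_th : forall s', 1 <= s' -> ~ rad R E (th (kpow R a s'))).
  { intros s' Hs' Hr'. apply Nta. rewrite th_kpow in Hr' by exact Hth.
    exact (rad_kpow R E _ s' Habs Hs' Hr'). }
  destruct (Hprim L HL Es) as [[|[|i]] [Hi [Ei|Ri]]].
  - exact (Na Ei).
  - apply (Hrad_th s Hs). cbn in Ri. fold (kmul R (one R) (kpow R a s)) in Ri.
    rewrite kmul_1l in Ri. exact Ri.
  - exact (Ns Ei).
  - apply Nta. cbn in Ri. fold (kmul R a (one R)) in Ri. rewrite kmul_1r in Ri. exact Ri.
  - apply (hyperideal_not_one R E HE Hp). cbn in Ei. rewrite nth_repeat_lt in Ei by lia. exact Ei.
  - assert (HLi : repl (S (S i)) (one R) L = L).
    { rewrite <- (repl_nth (S (S i)) L (zero R)) at 2 by lia.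
      cbn [nth L]. rewrite nth_repeat_lt by lia. reflexivity. }
    rewrite HLi in Ri. exact (Hrad_th (S s) ltac:(lia) Ri).
Qed.

Theorem mainTheorem19 (R : KrasnerHyperring) (th : car R -> car R)
  (t : nat) (E : nat -> car R -> Prop) :
  endomorphism R th ->
  0 < t ->
  (forall j, j < t -> endo_primary R th (E j)) ->
  (forall j l, j < t -> l < t -> forall x, rad R (E j) x <-> rad R (E l) x) ->
  endo_primary R th (fun x => forall j, j < t -> E j x).
Proof.
  intros Hth Ht HE Hrad.
  assert (Habs : forall j, j < t -> absorbing R (E j))
    by (intros j Hj; apply hyperideal_absorbing, HE, Hj).
  assert (Hrad0 : forall x, rad R (fun x => forall j, j < t -> E j x) x <-> rad R (E 0) x).
  { intros x. rewrite rad_bigcap by exact Habs.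
    split; [auto | intros Hx j Hj; apply (Hrad j 0); auto]. }
  split; [|split].
  - apply hyperideal_bigcap; auto. intros j Hj; apply HE, Hj.
  - destruct (HE 0 Ht) as (_ & [x Hx] & _). exists x. auto.
  - intros us Hl HI.
    destruct (classic (exists i, i < ar_n R /\ rad R (E 0) (th (kop R (repl i (one R) us)))))
      as [[i [Hi Hr]] | Hno].
    { exists i. split; [exact Hi|]. right. apply Hrad0, Hr. }
    destruct (HE 0 Ht) as (_ & _ & Hprim).
    destruct (Hprim us Hl (HI 0 Ht)) as [i [Hi [Hu | Hr]]]; [| exfalso; eauto].
    exists i. split; [exact Hi|]. left. intros j Hj.
    apply (endo_primary_mem_of_rad R th); auto.
    + apply (Hrad j 0); auto. apply rad_mem; auto.
    + intros Hr. apply Hno, (rad_th_kop_repl_of_rad_th_nth R th (E 0) us i); auto.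
      apply (Hrad 0 j); auto.
Qed.
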